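(* Let $p$ be an odd prime, let $h_1,h_2$ be relatively prime positive integers, both different from $1$, such that $h=h_1+h_2$ is odd. Let $\mathcal{D}(x_1,x_2)=(px_1+x_2^{p^{h_1}},\ px_2+x_1^{p^{h_2}})$, and let $(\xi_1,\eta_1)\in\overline{\mathbb{Q}}_p^{\,2}$ be a non-zero $p$-torsion point of $\mathcal D$, i.e. $(\xi_1,\eta_1)\ne(0,0)$ and $\mathcal{D}(\xi_1,\eta_1)=(0,0)$. Let $U_h$ be the unramified extension of degree $h$ of $\mathbb{Q}_p$ in $\overline{\mathbb{Q}}_p$. Then: (1) $U_h(\xi_1)=U_h(\eta_1)$; (2) the extension $U_h(\xi_1)/U_h$ is totally ramified of degree $\frac{p^h-1}{2}$.
   Context: $\mathcal D$ is a simple approximation of the multiplication-by-$p$ endomorphism of the 2-dimensional Lubin–Tate formal group over $\mathbb{Z}_p$ associated with $(h_1,h_2)$. *)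

From HB Require Import structures.
From mathcomp Require Import all_boot all_order all_algebra.
From mathcomp Require Import reals.
Set Implicit Arguments. Unset Strict Implicit. Unset Printing Implicit Defensive.
Import Order.TTheory GRing.Theory Num.Theory.
Local Open Scope ring_scope.

Definition is_subfield (C : fieldType) (S : C -> Prop) : Prop :=
  [/\ S 0, S 1, (forall x y, S x -> S y -> S (x - y)),
      (forall x y, S x -> S y -> S (x * y)) & (forall x, S x -> S x^-1)].

Definition gen_field (C : fieldType) (E : C -> Prop) (a : C) : C -> Prop :=
  fun x => forall S : C -> Prop, is_subfield S -> (forall y, E y -> S y) -> S a -> S x.

Definition ext_degree (C : fieldType) (E F : C -> Prop) (n : nat) : Prop :=
  exists b : 'I_n -> C,
    [/\ (forall i, F (b i)),
        (forall x, F x -> exists c : 'I_n -> C,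
                   (forall i, E (c i)) /\ x = \sum_(i < n) c i * b i) &
        (forall c : 'I_n -> C, (forall i, E (c i)) ->
                   \sum_(i < n) c i * b i = 0 -> forall i, c i = 0)].

Definition nonarch_absval (R : realType) (C : fieldType) (absv : C -> R) : Prop :=
  [/\ (forall x, 0 <= absv x), (forall x, absv x = 0 <-> x = 0),
      (forall x y, absv (x * y) = absv x * absv y) &
      (forall x y, absv (x + y) <= Num.max (absv x) (absv y))].

(* ramification index e(F/E) = n : the value group |F^x| contains |E^x|
   with index n (n representatives b_i). *)
Definition ram_index (R : realType) (C : fieldType) (absv : C -> R)
    (E F : C -> Prop) (n : nat) : Prop :=
  exists b : 'I_n -> C,
    [/\ (forall i, F (b i) /\ b i != 0),
        (forall x, F x -> x != 0 ->
           exists i a, [/\ E a, a != 0 & absv x = absv (b i) * absv a]) &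
        (forall i j a, E a -> a != 0 -> absv (b i) = absv (b j) * absv a -> i = j)].

Definition totally_ramified_of_degree (R : realType) (C : fieldType) (absv : C -> R)
    (E F : C -> Prop) (d : nat) : Prop :=
  ext_degree E F d /\ ram_index absv E F d.

Definition unramified_of_degree (R : realType) (C : fieldType) (absv : C -> R)
    (E F : C -> Prop) (d : nat) : Prop :=
  ext_degree E F d /\ ram_index absv E F 1.

(* Topological closure of Q in C: this is Q_p inside Qbar_p. *)
Definition Qclosure (R : realType) (C : fieldType) (absv : C -> R) : C -> Prop :=
  fun x => forall eps : R, 0 < eps -> exists q : rat, absv (x - ratr q) < eps.

Definition complete_on (R : realType) (C : fieldType) (absv : C -> R) (K : C -> Prop) :=
  forall u : nat -> C, (forall n, K (u n)) ->
    (forall eps : R, 0 < eps -> exists N, forall m n, (N <= m)%N -> (N <= n)%N ->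
        absv (u m - u n) < eps) ->
    exists l : C, forall eps : R, 0 < eps -> exists N, forall n, (N <= n)%N ->
        absv (u n - l) < eps.

Definition algebraic_over (C : fieldType) (K : C -> Prop) : Prop :=
  forall x : C, exists q : {poly C}, [/\ q != 0, (forall i, K q`_i) & root q x].

(* (C, absv) is a model of Qbar_p with its p-adic absolute value, normalised
   |p| = 1/p: C algebraically closed of characteristic 0, absv non-archimedean,
   the closure Qclosure of Q in C (= Q_p) complete, and C algebraic over it. *)
Definition Qpbar_model (R : realType) (C : closedFieldType) (absv : C -> R) (p : nat) :=
  [/\ [pchar C] =i pred0, nonarch_absval absv, absv p%:R = (p%:R)^-1,
      complete_on absv (Qclosure absv) & algebraic_over (Qclosure absv)].

From HB Require Import structures.
From mathcomp Require Import all_boot all_order all_algebra.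
From mathcomp Require Import reals boolp.
From mathcomp Require Import zify ring lra.
Set Implicit Arguments. Unset Strict Implicit. Unset Printing Implicit Defensive.
Import Order.TTheory GRing.Theory Num.Theory.

(** The torsion equations give xi^(p^h) = (-p)^(p^h1 + 1) xi.  With
    N = (p^h - 1)/2 and M = (p^h1 + 1)/2 this says xi^N = ±(-p)^M, so xi^N lies
    in U and |xi|^N = p^-M, where N and M are coprime because h is odd and h1, h2
    are coprime.  Hence U(xi) is spanned over U by 1, xi, ..., xi^(N-1).  Since U
    is unramified over Q_p its value group is p^Z, so the values |xi|^i, i < N,
    lie in distinct cosets of it, and by the ultrametric inequality a U-linear
    combination of these powers has the absolute value of its largest term.
    This gives both the linear independence of the powers and e(U(xi)/U) = N.
    Part (1) holds because each of xi, eta is a rational expression in the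
    other over U. *)

Lemma expn_gcdn_mod1 G p a b :
  p ^ a = 1 %[mod G] -> p ^ b = 1 %[mod G] -> p ^ gcdn a b = 1 %[mod G].
Proof.
case: a => [|a] pa1 pb1; first by rewrite gcd0n.
have [u _ /dvdnP[v uE]] := Bezoutl b (ltn0Sn a).
have : p ^ (gcdn a.+1 b + u * b) = 1 %[mod G].
  by rewrite uE mulnC expnM -modnXm pa1 modnXm exp1n.
by rewrite expnD [u * b]mulnC expnM -modnMmr -modnXm pb1 modnXm exp1n modnMmr muln1.
Qed.

(* Modulo G both p ^ h and p ^ (2 a) are 1, hence so is p, and p ^ a + 1 = 2. *)
Lemma gcdn_pred_expn_succ_expn p h a : (0 < p)%N -> coprime h (2 * a) ->
  gcdn (p ^ h).-1 (p ^ a + 1) %| 2.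
Proof.
move=> p_gt0 co_h2a; set G := gcdn _ _.
have G_gt0 : (0 < G)%N by rewrite gcdn_gt0 addn1 orbT.
have ph1 : p ^ h = 1 %[mod G].
  by apply/eqP; rewrite eqn_mod_dvd ?expn_gt0 ?p_gt0 // subn1 dvdn_gcdl.
have p2a1 : p ^ (2 * a) = 1 %[mod G].
  apply/eqP; rewrite eqn_mod_dvd ?expn_gt0 ?p_gt0 // mulnC expnM.
  by rewrite -{2}(exp1n 2) subn_sqr dvdn_mull // dvdn_gcdr.
have := expn_gcdn_mod1 ph1 p2a1; rewrite (eqP co_h2a) expn1 => p1.
have : p ^ a + 1 = 2 %[mod G] by rewrite -modnDml -modnXm p1 modnXm exp1n modnDml.
by rewrite (eqP (dvdn_gcdr _ _)) => /esym/eqP; rewrite -/(dvdn _ _).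
Qed.

Lemma coprime_half_pred_expn_half_succ_expn p h a : odd p -> coprime h (2 * a) ->
  coprime ((p ^ h).-1 %/ 2) ((p ^ a + 1) %/ 2).
Proof.
move=> odd_p co_h2a; have p_gt0 : (0 < p)%N by case: p odd_p.
have odd_pX n : odd (p ^ n) by rewrite oddX odd_p orbT.
have predE : (p ^ h).-1 = 2 * ((p ^ h).-1 %/ 2).
  rewrite mulnC divnK // dvdn2; move: (odd_pX h).
  by case: (p ^ h) (expn_gt0 p h) => // n _; rewrite /= => /negbNE.
have succE : p ^ a + 1 = 2 * ((p ^ a + 1) %/ 2).
  by rewrite mulnC divnK // dvdn2 addn1 /= odd_pX.
have := gcdn_pred_expn_succ_expn p_gt0 co_h2a.
move: predE succE; set N := _ %/ 2; set M := _ %/ 2 => -> ->.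
by rewrite -muln_gcdr -{2}(muln1 2) dvdn_pmul2l // dvdn1.
Qed.

Lemma half_pred_expn_gt0 p h : 2 < p -> 0 < h -> 0 < (p ^ h).-1 %/ 2.
Proof.
move=> p_gt2 h_gt0; have : p ^ 1 <= p ^ h by rewrite leq_pexp2l ?(ltn_trans _ p_gt2).
by rewrite expn1 divn_gt0 //; lia.
Qed.

Local Open Scope ring_scope.

Definition is_power_of (R : numFieldType) (p : nat) (r : R) := exists k : int, r = p%:R ^ k.

Lemma is_power_ofM (R : numFieldType) p (r s : R) : (0 < p)%N ->
  is_power_of p r -> is_power_of p s -> is_power_of p (r * s).
Proof. by move=> p_gt0 [a ->] [b ->]; exists (a + b); rewrite expfzDr ?pnatr_eq0 -?lt0n. Qed.

Lemma is_power_ofV (R : numFieldType) p (r : R) : is_power_of p r -> is_power_of p r^-1.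
Proof. by move=> [a ->]; exists (- a); rewrite invr_expz. Qed.

Lemma is_power_of_invX (R : numFieldType) p n : is_power_of p ((p%:R : R)^-1 ^+ n).
Proof. by exists (- n%:Z); rewrite exprnP exprz_inv. Qed.

Section NonarchAbsval.
Variables (R : realType) (C : fieldType) (absv : C -> R).
Hypothesis absvP : nonarch_absval absv.

Lemma absv_ge0 x : 0 <= absv x.
Proof. by case: absvP. Qed.

Lemma absv_eq0 x : (absv x == 0) = (x == 0).
Proof. by case: absvP => _ absv0P _ _; apply/eqP/eqP => /absv0P. Qed.

Lemma absv_gt0 x : (0 < absv x) = (x != 0).
Proof. by rewrite lt_def absv_eq0 absv_ge0 andbT. Qed.

Lemma absv0 : absv 0 = 0.
Proof. by apply/eqP; rewrite absv_eq0. Qed.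

Lemma absvM x y : absv (x * y) = absv x * absv y.
Proof. by case: absvP. Qed.

Lemma absvD_le x y : absv (x + y) <= Num.max (absv x) (absv y).
Proof. by case: absvP. Qed.

Lemma absv1 : absv 1 = 1.
Proof.
have absv1_neq0 : absv 1 != 0 by rewrite absv_eq0 oner_eq0.
by apply: (mulfI absv1_neq0); rewrite -absvM !mulr1.
Qed.

Lemma absvX x n : absv (x ^+ n) = absv x ^+ n.
Proof. by elim: n => [|n IHn]; rewrite ?absv1 // !exprS absvM IHn. Qed.

Lemma absvN x : absv (- x) = absv x.
Proof.
have : absv (-1) ^+ 2 == 1 by rewrite -absvX sqrrN expr1n absv1.
rewrite sqrp_eq1 ?absv_ge0 // => /eqP absvN1.
by rewrite -mulN1r absvM absvN1 mul1r.
Qed.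

Lemma absvV x : absv x^-1 = (absv x)^-1.
Proof.
have [->|x_neq0] := eqVneq x 0; first by rewrite invr0 absv0 invr0.
have absx_neq0 : absv x != 0 by rewrite absv_eq0.
by apply: (mulfI absx_neq0); rewrite -absvM !mulfV // absv1.
Qed.

Lemma absvD_ltl x y : absv x < absv y -> absv (x + y) = absv y.
Proof.
move=> lt_xy; apply/eqP; rewrite eq_le; apply/andP; split.
  by have := absvD_le x y; rewrite (max_idPr (ltW lt_xy)).
have := absvD_le (x + y) (- x); rewrite addrC addKr absvN le_max.
by case/orP=> // le_yx; move: lt_xy; rewrite ltNge le_yx.
Qed.

Lemma absv_sum_lt (I : Type) (r : seq I) (P : pred I) (F : I -> C) b :
  0 < b -> (forall i, P i -> absv (F i) < b) -> absv (\sum_(i <- r | P i) F i) < b.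
Proof.
move=> b_gt0 ltFb; apply: (big_ind (fun x => absv x < b)) => //; first by rewrite absv0.
by move=> x y ltxb ltyb; apply: le_lt_trans (absvD_le x y) _; rewrite gt_max ltxb.
Qed.

(* The term of largest absolute value dominates the sum. *)
Lemma absv_sum_distinct (I : finType) (t : I -> C) i0 : t i0 != 0 ->
  (forall i j, t i != 0 -> t j != 0 -> absv (t i) = absv (t j) -> i = j) ->
  exists2 i, t i != 0 & absv (\sum_i t i) = absv (t i).
Proof.
move=> ti0_neq0 absv_t_inj.
have [i _ max_i] := @arg_maxP _ _ I i0 predT (absv \o t) isT.
have {}max_i j : absv (t j) <= absv (t i) by exact: max_i.
have ti_neq0 : t i != 0.
  by rewrite -absv_gt0 (lt_le_trans _ (max_i i0)) ?absv_gt0.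
exists i => //; rewrite (bigD1 i) //= addrC absvD_ltl //.
apply: absv_sum_lt => [|j /= j_neq_i]; first by rewrite absv_gt0.
rewrite lt_neqAle max_i andbT; apply: contra j_neq_i => /eqP absv_ji.
have [tj0|tj_neq0] := eqVneq (t j) 0; last by rewrite (absv_t_inj _ _ tj_neq0 ti_neq0).
by move: absv_ji; rewrite tj0 absv0 => /esym/eqP; rewrite absv_eq0 (negPf ti_neq0).
Qed.

Lemma absv_natr_le1 n : absv n%:R <= 1.
Proof.
elim: n => [|n IHn]; first by rewrite absv0.
by rewrite -addn1 natrD (le_trans (absvD_le _ _)) // ge_max IHn absv1 lexx.
Qed.

Lemma absv_intr_le1 (z : int) : absv z%:~R <= 1.
Proof. by case: z => n; rewrite ?NegzE ?mulrNz ?absvN absv_natr_le1. Qed.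


Variable p : nat.
Hypotheses (absv_p : absv p%:R = p%:R^-1) (p_prime : prime p).
Hypothesis C_char0 : [pchar C] =i pred0.

Lemma absv_natr_coprime m : coprime m p -> absv m%:R = 1.
Proof.
move=> co_mp; have [u [v uvE]] := Bezoutz m p.
have {uvE} : u%:~R * m%:R + v%:~R * p%:R = 1 :> C.
  by have := congr1 (fun z : int => z%:~R : C) uvE; rewrite /gcdz (eqP co_mp) intrD !intrM.
move=> /(congr1 absv); rewrite absv1 => absv_uv.
have p_gt1 : 1 < p%:R :> R by rewrite ltr1n prime_gt1.
have le_vp : absv (v%:~R * p%:R) < 1.
  have p_inv_lt1 : p%:R^-1 < 1 :> R by rewrite invf_lt1 ?(lt_trans ltr01).
  rewrite absvM absv_p (le_lt_trans _ p_inv_lt1) //.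
  by rewrite ler_piMl ?invr_ge0 ?ler0n ?absv_intr_le1.
apply/eqP; rewrite eq_le absv_natr_le1 //=.
have := absvD_le (u%:~R * m%:R) (v%:~R * p%:R); rewrite absv_uv le_max.
case/orP=> [le1_um|]; last by rewrite leNgt le_vp.
by rewrite (le_trans le1_um) // absvM ler_piMl ?absv_ge0 ?absv_intr_le1.
Qed.

Lemma absv_natr_power n : (0 < n)%N -> is_power_of p (absv n%:R).
Proof.
move=> n_gt0; have [m co_mp ->] := pfactor_coprime p_prime n_gt0.
rewrite natrM natrX absvM absvX absv_p absv_natr_coprime ?mul1r 1?coprime_sym //.
exact: is_power_of_invX.
Qed.

Lemma absv_intr_power (z : int) : z != 0 -> is_power_of p (absv z%:~R).
Proof.
by case: z => n; rewrite ?NegzE ?mulrNz ?absvN => n_neq0; apply: absv_natr_power; lia.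
Qed.

Lemma absv_ratr_power (q : rat) : q != 0 -> is_power_of p (absv (ratr q : C)).
Proof.
move=> q_neq0; have p_gt0 := prime_gt0 p_prime.
have den_neq0 : (denq q)%:~R != 0 :> C.
  have /pcharf0P charE := C_char0.
  by rewrite -(gtz0_abs (denq_gt0 q)) charE -lt0n absz_gt0 denq_neq0.
rewrite /ratr absvM absvV; apply: is_power_ofM => //.
  by apply: absv_intr_power; rewrite numq_eq0.
exact/is_power_ofV/absv_intr_power/denq_neq0.
Qed.

Lemma absv_Qclosure_power x : Qclosure absv x -> x != 0 -> is_power_of p (absv x).
Proof.
move=> Qx x_neq0; have [q absv_xq] := Qx _ (etrans (absv_gt0 x) x_neq0).
have absv_q : absv (ratr q : C) = absv x.
  have := @absvD_ltl (- (x - ratr q)) x; rewrite absvN => /(_ absv_xq) <-.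
  by rewrite opprB subrK.
have q_neq0 : q != 0.
  by apply: contra_neq x_neq0 => q0; apply/eqP; rewrite -absv_eq0 -absv_q q0 /ratr mul0r absv0.
by rewrite -absv_q; apply: absv_ratr_power.
Qed.

(* Taking x = 1 in the definition of ram_index shows that the single
   representative b_0 has |b_0| = |a_1|^-1 for some a_1 in Q_p. *)
Lemma absv_unramified_power (U : C -> Prop) a :
  is_subfield U -> ram_index absv (Qclosure absv) U 1 -> U a -> a != 0 ->
  is_power_of p (absv a).
Proof.
move=> [_ U1 _ _ _] [b [_ b_val _]] Ua a_neq0.
have [i [a1 [Qa1 a1_neq0 absv1E]]] := b_val 1 U1 (oner_neq0 _).
have [j [a2 [Qa2 a2_neq0 ->]]] := b_val a Ua a_neq0.
have absv_b : absv (b j) = (absv a1)^-1.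
  have absv_a1_neq0 : absv a1 != 0 by rewrite absv_eq0.
  by apply: (mulIf absv_a1_neq0); rewrite mulVf // !ord1 in absv1E *; rewrite -absv1E absv1.
rewrite absv_b; apply: is_power_ofM (prime_gt0 p_prime) _ _.
- exact/is_power_ofV/absv_Qclosure_power.
- exact: absv_Qclosure_power.
Qed.

End NonarchAbsval.

(* Raising to the power N turns the relation into M (j - i) = k N, and N is coprime to M. *)
Lemma expr_inj_mod_powz (R : realFieldType) (P r : R) (N M i j : nat) (k : int) :
  1 < P -> coprime N M -> r ^+ N = P^-1 ^+ M -> (i < N)%N -> (j < N)%N ->
  r ^+ i = r ^+ j * P ^ k -> i = j.
Proof.
move=> P_gt1 co_NM rN lt_iN lt_jN /(congr1 (fun x => x ^+ N)).
have P_gt0 : 0 < P := lt_trans ltr01 P_gt1.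
rewrite exprMn -!exprM ![(_ * N)%N]mulnC !exprM rN -!exprM !exprnP !exprz_inv.
rewrite exprz_exp -expfzDr ?gt_eqF // => /(ieexprIz P_gt0 (negbT (gt_eqF P_gt1))) ijE.
have : (N%:Z %| M%:Z * (j%:Z - i%:Z))%Z.
  by apply/dvdzP; exists k; lia.
rewrite Gauss_dvdzr ?coprimezE // => /dvdzP[q qE].
have [|[|]] : (q <= -1 \/ q = 0 \/ 1 <= q)%R by lia.
- move=> q_le; suff : (q * N%:Z <= - N%:Z)%R by lia.
  by nia.
- by move=> q0; move: qE; rewrite q0 mul0r; lia.
- move=> q_ge; suff : (N%:Z <= q * N%:Z)%R by lia.
  by nia.
Qed.

Section Subfield.
Variables (C : fieldType) (U : C -> Prop).
Hypothesis U_subfield : is_subfield U.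

Lemma subfield0 : U 0. Proof. by case: U_subfield. Qed.
Lemma subfield1 : U 1. Proof. by case: U_subfield. Qed.

Lemma subfieldB x y : U x -> U y -> U (x - y).
Proof. by case: U_subfield => _ _ UB _ _; apply: UB. Qed.

Lemma subfieldM x y : U x -> U y -> U (x * y).
Proof. by case: U_subfield => _ _ _ UM _; apply: UM. Qed.

Lemma subfieldV x : U x -> U x^-1.
Proof. by case: U_subfield => _ _ _ _ UV; apply: UV. Qed.

Lemma subfieldN x : U x -> U (- x).
Proof. by move=> Ux; rewrite -sub0r; apply: subfieldB subfield0 Ux. Qed.

Lemma subfieldD x y : U x -> U y -> U (x + y).
Proof. by move=> Ux Uy; rewrite -[y]opprK; apply: subfieldB Ux (subfieldN Uy). Qed.

Lemma subfieldX x n : U x -> U (x ^+ n).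
Proof.
by move=> Ux; elim: n => [|n IHn]; [exact: subfield1 | rewrite exprS; apply: subfieldM].
Qed.

Lemma subfield_nat n : U n%:R.
Proof.
by elim: n => [|n IHn]; [exact: subfield0 | rewrite -addn1 natrD; apply: subfieldD IHn subfield1].
Qed.

End Subfield.

Section GeneratedField.
Variables (C : fieldType) (E : C -> Prop) (a : C).

Lemma gen_field_subfield : is_subfield (gen_field E a).
Proof.
split=> [S S_sf _ _|S S_sf _ _|x y Sx Sy S S_sf ES Sa|x y Sx Sy S S_sf ES Sa|x Sx S S_sf ES Sa].
- exact: subfield0.
- exact: subfield1.
- by apply: subfieldB => //; [apply: Sx | apply: Sy].
- by apply: subfieldM => //; [apply: Sx | apply: Sy].
- by apply: subfieldV => //; apply: Sx.
Qed.

Lemma gen_field_base y : E y -> gen_field E a y.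
Proof. by move=> Ey S _ ES _; apply: ES. Qed.

Lemma gen_field_gen : gen_field E a a.
Proof. by move=> S _ _ Sa. Qed.

Lemma gen_field_min (S : C -> Prop) : is_subfield S -> (forall y, E y -> S y) -> S a ->
  forall x, gen_field E a x -> S x.
Proof. by move=> S_sf ES Sa x; apply. Qed.

End GeneratedField.

Lemma gen_field_eq (C : fieldType) (E : C -> Prop) a b :
  gen_field E a b -> gen_field E b a -> forall x, gen_field E a x <-> gen_field E b x.
Proof.
move=> Eab Eba x; split; apply: gen_field_min => //;
  by [exact: gen_field_subfield | exact: gen_field_base].
Qed.

Lemma gen_field_solve (C : fieldType) (E : C -> Prop) (c x y : C) n :
  is_subfield E -> E c -> c != 0 -> c * x + y ^+ n = 0 -> gen_field E y x.
Proof.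
move=> E_sf Ec c_neq0 /eqP; rewrite addr_eq0 => /eqP cxE.
have -> : x = c^-1 * - y ^+ n by rewrite -cxE mulKf.
have F_sf := gen_field_subfield E y.
apply: (subfieldM F_sf (subfieldV F_sf (gen_field_base Ec))).
by apply: (subfieldN F_sf); apply: (subfieldX F_sf); apply: gen_field_gen.
Qed.

(* Guarding membership by [is_subfield U] makes the predicate closed under the
   field operations unconditionally, so it carries a canonical subfield type. *)
Definition subfield_mem (C : fieldType) (U : C -> Prop) : pred C :=
  fun x => `[< is_subfield U -> U x >].

Lemma subfield_mem_divring_closed (C : fieldType) (U : C -> Prop) :
  divring_closed (subfield_mem U).
Proof.
split=> [|x y /asboolP Ux /asboolP Uy|x y /asboolP Ux /asboolP Uy];
  apply/asboolP => U_sf; first exact: subfield1.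
  exact: subfieldB (Ux U_sf) (Uy U_sf).
exact: subfieldM (Ux U_sf) (subfieldV U_sf (Uy U_sf)).
Qed.

HB.instance Definition _ (C : fieldType) (U : C -> Prop) :=
  GRing.isDivringClosed.Build C (subfield_mem U) (subfield_mem_divring_closed U).

Notation subfield_type U := {x | subfield_mem U x}.
HB.instance Definition _ (C : fieldType) (U : C -> Prop) :=
  [SubChoice_isSubComUnitRing of subfield_type U by <:].
HB.instance Definition _ (C : fieldType) (U : C -> Prop) :=
  [SubComUnitRing_isSubIntegralDomain of subfield_type U by <:].
HB.instance Definition _ (C : fieldType) (U : C -> Prop) :=
  [SubIntegralDomain_isSubField of subfield_type U by <:].

Section LinearDependence.
Variables (C : fieldType) (U : C -> Prop).
Hypothesis U_subfield : is_subfield U.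

Lemma subfield_memP x : reflect (U x) (subfield_mem U x).
Proof. by rewrite /subfield_mem; apply: (iffP (asboolP _)) => [|Ux _]; [apply|]. Qed.

(* The kernel of an (n+1) x n matrix over the subfield is non-trivial. *)
Lemma subfield_vectors_dependent n (w : 'I_n.+1 -> 'I_n -> C) :
  (forall j k, U (w j k)) ->
  exists c : 'I_n.+1 -> C, [/\ forall j, U (c j), exists j, c j != 0 &
    forall k, \sum_j c j * w j k = 0].
Proof.
move=> Uw.
pose W : 'M[subfield_type U]_(n.+1, n) :=
  \matrix_(j, k) Sub (w j k) (introT (subfield_memP _) (Uw j k)).
have : (0 < \rank (kermx W))%N by rewrite mxrank_ker; have := rank_leq_col W; lia.
rewrite lt0n mxrank_eq0 => /rowV0Pn[y /sub_kermxP yW /rV0Pn[j yj_neq0]].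
exists (fun j => val (y 0 j)); split.
- by move=> j'; apply/subfield_memP; exact: valP.
- by exists j; rewrite -(inj_eq val_inj) in yj_neq0.
- move=> k; have := congr1 (fun M : 'rV_n => val (M 0 k)) yW.
  rewrite !mxE rmorph_sum rmorph0 => sum0; apply: etrans sum0.
  by apply: eq_bigr => j' _; rewrite rmorphM mxE.
Qed.

End LinearDependence.

Section PowerSpan.
Variables (C : fieldType) (U : C -> Prop) (N : nat) (xi : C).
Hypothesis U_subfield : is_subfield U.

Definition power_span x :=
  exists c : 'I_N -> C, (forall i, U (c i)) /\ x = \sum_(i < N) c i * xi ^+ i.

Lemma power_span0 : power_span 0.
Proof.
exists (fun=> 0); split=> [_|]; first exact: subfield0.
by rewrite big1 // => i _; rewrite mul0r.
Qed.

Lemma power_spanD x y : power_span x -> power_span y -> power_span (x + y).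
Proof.
move=> [c [Uc ->]] [d [Ud ->]]; exists (fun i => c i + d i); split.
  by move=> i; apply: subfieldD.
by rewrite -big_split; apply: eq_bigr => i _; rewrite mulrDl.
Qed.

Lemma power_spanZ a x : U a -> power_span x -> power_span (a * x).
Proof.
move=> Ua [c [Uc ->]]; exists (fun i => a * c i); split.
  by move=> i; apply: subfieldM.
by rewrite mulr_sumr; apply: eq_bigr => i _; rewrite mulrA.
Qed.

Lemma power_span_sum (I : Type) (r : seq I) (F : I -> C) :
  (forall i, power_span (F i)) -> power_span (\sum_(i <- r) F i).
Proof.
by move=> spanF; elim/big_rec: _ => [|i x _]; [exact: power_span0 | apply: power_spanD].
Qed.

Lemma power_span_dependent (v : 'I_N.+1 -> C) : (forall j, power_span (v j)) ->
  exists c : 'I_N.+1 -> C, [/\ forall j, U (c j), exists j, c j != 0 &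
    \sum_j c j * v j = 0].
Proof.
move=> /choice[w /all_and2[Uw vE]].
have [c [Uc c_neq0 cw0]] := subfield_vectors_dependent U_subfield Uw.
exists c; split=> //.
under eq_bigr => j _ do rewrite vE mulr_sumr.
rewrite exchange_big big1 // => k _.
transitivity ((\sum_j c j * w j k) * xi ^+ k); last by rewrite cw0 mul0r.
by rewrite mulr_suml; apply: eq_bigr => j _; rewrite mulrA.
Qed.

Hypotheses (N_gt0 : (0 < N)%N) (U_xiN : U (xi ^+ N)).

Lemma power_span_expr n : power_span (xi ^+ n).
Proof.
elim/ltn_ind: n => n IHn; have [lt_nN|le_Nn] := ltnP n N.
  exists (fun i => (val i == n)%:R); split=> [i|]; first exact: subfield_nat.
  rewrite (bigD1 (Ordinal lt_nN)) //= eqxx mul1r big1 ?addr0 // => i.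
  by rewrite -(inj_eq val_inj) => /negPf /= ->; rewrite mul0r.
rewrite -(subnKC le_Nn) exprD; apply: power_spanZ U_xiN (IHn _ _).
by rewrite ltn_subrL N_gt0 (leq_trans N_gt0).
Qed.

Lemma power_span_base a : U a -> power_span a.
Proof. by move=> Ua; rewrite -[a]mulr1; apply: power_spanZ Ua (power_span_expr 0). Qed.

Lemma power_spanM x y : power_span x -> power_span y -> power_span (x * y).
Proof.
move=> [c [Uc ->]] [d [Ud ->]].
rewrite mulr_suml; apply: power_span_sum => i; rewrite -mulrA; apply: power_spanZ => //.
rewrite mulr_sumr; apply: power_span_sum => j; rewrite mulrCA -exprD.
exact: power_spanZ (power_span_expr _).
Qed.

Lemma power_spanX x n : power_span x -> power_span (x ^+ n).
Proof.
move=> spanx; elim: n => [|n IHn]; first exact: power_span_base (subfield1 U_subfield).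
by rewrite exprS; apply: power_spanM.
Qed.

(* After dividing out powers of s we may assume a_0 != 0; then
   a_0 + s T = 0 gives s^-1 = - a_0^-1 T. *)
Lemma power_spanV_of_relation s n (a : nat -> C) :
  power_span s -> s != 0 -> (forall j, U (a j)) -> (exists2 j, (j < n)%N & a j != 0) ->
  \sum_(j < n) a j * s ^+ j = 0 -> power_span s^-1.
Proof.
move=> spans s_neq0; elim: n a => [|n IHn] a Ua [j lt_jn aj_neq0]; first by [].
rewrite big_ord_recl expr0 mulr1.
under eq_bigr => i _ do rewrite lift0 exprS mulrCA.
rewrite -mulr_sumr; set T := \sum_(i < n) _.
have [a0|a0_neq0] := eqVneq (a 0%N) 0.
  rewrite a0 add0r => /eqP; rewrite mulf_eq0 (negPf s_neq0) => /eqP T0.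
  apply: (IHn (fun i => a i.+1)) T0 => //; case: j lt_jn aj_neq0 => [|j] lt_jn aj_neq0.
    by rewrite a0 eqxx in aj_neq0.
  by exists j.
move=> /eqP; rewrite addrC addr_eq0 => /eqP sT.
have -> : s^-1 = - (a 0%N)^-1 * T.
  by apply: (mulfI s_neq0); rewrite mulfV // mulrCA sT mulNr mulrN opprK mulVf.
apply: power_spanZ; first exact/(subfieldN U_subfield)/(subfieldV U_subfield).
by apply: power_span_sum => i; apply: power_spanZ => //; apply: power_spanX.
Qed.

Lemma power_spanV x : power_span x -> power_span x^-1.
Proof.
move=> spanx; have [->|x_neq0] := eqVneq x 0; first by rewrite invr0; apply: power_span0.
have [c [Uc [j cj_neq0] c0]] := power_span_dependent (fun j => power_spanX j spanx).
apply: (power_spanV_of_relation (n := N.+1) (a := fun j => c (inord j))) => //.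
  by exists j; rewrite ?inord_val.
by rewrite -[RHS]c0; apply: eq_bigr => i _; rewrite inord_val.
Qed.

Lemma power_span_subfield : is_subfield power_span.
Proof.
split; [exact: power_span0 | exact: power_span_base (subfield1 U_subfield) | | exact: power_spanM
  | exact: power_spanV].
move=> x y spanx spany; rewrite -mulN1r; apply: power_spanD spanx _.
exact: power_spanZ (subfieldN U_subfield (subfield1 U_subfield)) spany.
Qed.

Lemma gen_field_power_span x : gen_field U xi x -> power_span x.
Proof.
apply: gen_field_min; [exact: power_span_subfield | exact: power_span_base |].
by rewrite -[xi]expr1; apply: power_span_expr.
Qed.

End PowerSpan.

Section RadicalExtension.
Variables (R : realType) (C : fieldType) (absv : C -> R) (p : nat) (U : C -> Prop).
Variables (N M : nat) (xi : C).
Hypotheses (absvP : nonarch_absval absv) (U_subfield : is_subfield U) (p_gt1 : (1 < p)%N).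
Hypothesis U_values : forall a, U a -> a != 0 -> is_power_of p (absv a).
Hypotheses (N_gt0 : (0 < N)%N) (U_xiN : U (xi ^+ N)) (co_NM : coprime N M).
Hypothesis absv_xiN : absv xi ^+ N = p%:R^-1 ^+ M.

Lemma radical_neq0 : xi != 0.
Proof.
have : absv xi ^+ N != 0 by rewrite absv_xiN expf_neq0 // invr_eq0 pnatr_eq0 -lt0n ltnW.
by apply: contraNneq => ->; rewrite absv0 // expr0n gtn_eqF.
Qed.

Lemma absv_radical_expr_inj i j a : (i < N)%N -> (j < N)%N -> U a -> a != 0 ->
  absv (xi ^+ i) = absv (xi ^+ j) * absv a -> i = j.
Proof.
move=> lt_iN lt_jN Ua a_neq0; have [k ->] := U_values Ua a_neq0; rewrite !absvX //.
by apply: expr_inj_mod_powz co_NM absv_xiN lt_iN lt_jN; rewrite ltr1n.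
Qed.

Lemma absv_radical_sum (c : 'I_N -> C) i0 : (forall i, U (c i)) -> c i0 != 0 ->
  exists2 i : 'I_N, c i != 0 & absv (\sum_i c i * xi ^+ i) = absv (c i) * absv (xi ^+ i).
Proof.
move=> Uc ci0_neq0; have nz_coef i : c i * xi ^+ i != 0 -> c i != 0.
  by apply: contraNneq => ->; rewrite mul0r.
have [|i j ti_neq0 tj_neq0 absv_ij|i /nz_coef ci_neq0 ->] :=
  absv_sum_distinct absvP (t := fun i => c i * xi ^+ i) (i0 := i0).
- by rewrite mulf_neq0 ?expf_neq0 ?radical_neq0.
- have absv_ci : absv (c i) != 0 by rewrite absv_eq0 // nz_coef.
  apply/val_inj/(@absv_radical_expr_inj i j (c j / c i) (ltn_ord i) (ltn_ord j)).
  + apply: (subfieldM U_subfield (Uc j)); exact: (subfieldV U_subfield (Uc i)).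
  + by rewrite mulf_neq0 ?invr_neq0 ?nz_coef.
  + move: absv_ij; rewrite !(absvM absvP) (absvV absvP) => absv_ij.
    by apply: (mulfI absv_ci); rewrite absv_ij; field.
- by exists i; rewrite ?(absvM absvP).
Qed.

Lemma radical_totally_ramified : totally_ramified_of_degree absv U (gen_field U xi) N.
Proof.
have F_xiX i : gen_field U xi (xi ^+ i).
  by apply: (subfieldX (gen_field_subfield U xi)); apply: gen_field_gen.
have span_F x : gen_field U xi x -> power_span U N xi x by apply: gen_field_power_span.
split; exists (fun i : 'I_N => xi ^+ i); split=> //.
- move=> c Uc c0 i; apply/eqP/negPn/negP => ci_neq0.
  have [j cj_neq0] := absv_radical_sum Uc ci_neq0; rewrite c0 absv0 // => /esym/eqP.
  by rewrite mulf_eq0 !absv_eq0 // expf_eq0 (negPf radical_neq0) (negPf cj_neq0) andbF.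
- by move=> i; rewrite expf_neq0 ?radical_neq0.
- move=> x /span_F[c [Uc ->]] x_neq0.
  have [i0 ci0_neq0] : exists i, c i != 0.
    apply/existsP; move: x_neq0; apply: contraNT => /existsPn c0.
    by apply/eqP/big1 => i _; rewrite (eqP (negbNE (c0 i))) mul0r.
  have [i ci_neq0 absvE] := absv_radical_sum Uc ci0_neq0.
  by exists i, (c i); rewrite absvE mulrC.
- move=> i j a Ua a_neq0 absv_ij; apply: val_inj.
  exact: absv_radical_expr_inj (ltn_ord i) (ltn_ord j) Ua a_neq0 absv_ij.
Qed.

End RadicalExtension.

Lemma torsion_fst_neq0 (C : fieldType) (p h : nat) (xi eta : C) :
  p%:R != 0 :> C -> (xi, eta) != (0, 0) -> p%:R * eta + xi ^+ (p ^ h) = 0 -> xi != 0.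
Proof.
move=> p_neq0 nz e; apply: contra_neq nz => xi0.
have p_gt0 : (0 < p)%N by rewrite lt0n; apply: contraNneq p_neq0 => ->.
move: e; rewrite xi0 expr0n expn_eq0 gtn_eqF // addr0 => /eqP.
by rewrite mulf_eq0 (negPf p_neq0) => /eqP ->.
Qed.

(* Both sides times xi equal xi ^+ (p ^ (h1 + h2)). *)
Lemma torsion_radical_sqr (C : fieldType) (p h1 h2 : nat) (xi eta : C) :
  odd p -> xi != 0 ->
  p%:R * xi + eta ^+ (p ^ h1) = 0 -> p%:R * eta + xi ^+ (p ^ h2) = 0 ->
  (xi ^+ ((p ^ (h1 + h2)).-1 %/ 2)) ^+ 2 = ((- p%:R) ^+ ((p ^ h1 + 1) %/ 2)) ^+ 2.
Proof.
move=> odd_p xi_neq0 /eqP e1 /eqP e2.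
rewrite addrC addr_eq0 in e1; rewrite addrC addr_eq0 in e2.
have odd_pX n : odd (p ^ n) by rewrite oddX odd_p orbT.
have xi_pX : xi ^+ (p ^ (h1 + h2)) = (- p%:R) ^+ (p ^ h1 + 1) * xi.
  rewrite expnD mulnC exprM (eqP e2) -mulNr exprMn (eqP e1) addn1 exprSr -mulNr.
  by rewrite mulrA.
have pX_gt0 : (0 < p ^ (h1 + h2))%N by rewrite expn_gt0 (odd_gt0 odd_p).
have predE : ((p ^ (h1 + h2)).-1 %/ 2 * 2)%N = (p ^ (h1 + h2)).-1.
  by rewrite divnK // dvdn2 -oddS prednK // odd_pX.
have succE : ((p ^ h1 + 1) %/ 2 * 2)%N = (p ^ h1 + 1)%N.
  by rewrite divnK // dvdn2 addn1 oddS odd_pX.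
by apply: (mulIf xi_neq0); rewrite -!exprM predE succE -exprSr prednK // xi_pX.
Qed.

Theorem theorem5p7 (R : realType) (C : closedFieldType) (absv : C -> R)
    (p h1 h2 : nat) (U : C -> Prop) (xi eta : C) :
  Qpbar_model absv p ->
  prime p -> odd p ->
  (0 < h1)%N -> (0 < h2)%N -> coprime h1 h2 -> h1 != 1%N -> h2 != 1%N ->
  odd (h1 + h2) ->
  (* U = U_h : the unramified extension of degree h of Q_p inside C *)
  is_subfield U -> (forall x, Qclosure absv x -> U x) ->
  unramified_of_degree absv (Qclosure absv) U (h1 + h2) ->
  (* (xi, eta) non-zero p-torsion point of D *)
  (xi, eta) != (0, 0) ->
  p%:R * xi + eta ^+ (p ^ h1) = 0 ->
  p%:R * eta + xi ^+ (p ^ h2) = 0 ->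
  (forall x, gen_field U xi x <-> gen_field U eta x) /\
  totally_ramified_of_degree absv U (gen_field U xi) ((p ^ (h1 + h2)).-1 %/ 2).
Proof.
move=> [char0 absvP absv_p _ _] p_prime odd_p h1_gt0 _ co_h12 _ _ odd_h U_sf _ [_ ramU]
  nz e1 e2.
have p_neq0 : p%:R != 0 :> C by have /pcharf0P -> := char0; rewrite -lt0n prime_gt0.
have Up : U p%:R := subfield_nat U_sf p.
have xi_neq0 := torsion_fst_neq0 p_neq0 nz e2.
split; first exact: gen_field_eq (gen_field_solve U_sf Up p_neq0 e2)
                                 (gen_field_solve U_sf Up p_neq0 e1).
set M := ((p ^ h1 + 1) %/ 2)%N.
have U_pM : U ((- p%:R) ^+ M) by apply: (subfieldX U_sf); apply: (subfieldN U_sf).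
have absv_pM : absv ((- p%:R) ^+ M) = p%:R^-1 ^+ M.
  by rewrite (absvX absvP) (absvN absvP) absv_p.
have [U_xiN absv_xiN] : U (xi ^+ ((p ^ (h1 + h2)).-1 %/ 2)) /\
    absv xi ^+ ((p ^ (h1 + h2)).-1 %/ 2) = p%:R^-1 ^+ M.
  have /eqP := torsion_radical_sqr odd_p xi_neq0 e1 e2.
  rewrite eqf_sqr -(absvX absvP) => /orP[]/eqP ->; first by [].
  by rewrite (absvN absvP); split=> //; apply: (subfieldN U_sf).
apply: radical_totally_ramified absv_xiN => //; first exact: prime_gt1.
- by move=> a; apply: absv_unramified_power.
- exact: half_pred_expn_gt0 (odd_prime_gt2 odd_p p_prime) (ltn_addr _ h1_gt0).
- rewrite /M; apply: coprime_half_pred_expn_half_succ_expn => //.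
  by rewrite coprimeMr coprimen2 odd_h coprime_sym /coprime gcdnDl.
Qed.
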